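(* Let $L$ be a $\kappa$-frame and $C\in\mathbb{C}L$. The quotient $L/C$ is d-reduced if and only if $C$ is clear.
   Context: $\kappa$ is a fixed regular cardinal; a $\kappa$-frame is a bounded distributive lattice having joins of all subsets of cardinality $<\kappa$ and satisfying the frame distributive law for such joins. A $\kappa$-ideal is a downset in which every subset of cardinality $<\kappa$ has an upper bound. A congruence is an equivalence relation that is a sub-$\kappa$-frame of $L\times L$; $\mathbb{C}L$ is the frame of congruences. For a $\kappa$-ideal $I$, $\partial_I=\{(a,b)\mid\forall x\in L:\ a\wedge x\in I\iff b\wedge x\in I\}$; a congruence is clear if it equals $\partial_I$ for some $\kappa$-ideal $I$. For a $\kappa$-frame $M$, $\mathfrak{D}_M=\{(a,b)\mid\forall x\in M:\ a\wedge x=0\iff b\wedge x=0\}$, and $M$ is d-reduced if $\mathfrak{D}_M$ is the trivial (diagonal) congruence, i.e. $a\ne b$ implies there is $x$ with exactly one of $a\wedge x$, $b\wedge x$ equal to $0$. *)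

From Stdlib Require Import Classical ClassicalEpsilon FunctionalExtensionality PropExtensionality.

Set Implicit Arguments.

(** * Cardinals, via a representing type [K] *)

Definition card_le (A B : Type) : Prop := exists f : A -> B, forall x y, f x = f y -> x = y.

Definition card_lt (K A : Type) : Prop := card_le A K /\ ~ card_le K A.

Record regular_card (K : Type) : Prop := {
  rc_infinite : card_le nat K;
  rc_regular : forall (I : Type) (F : I -> Type),
      card_lt K I -> (forall i, card_lt K (F i)) -> card_lt K {i : I & F i}
}.

Definition small (K : Type) {L : Type} (S : L -> Prop) : Prop := card_lt K {x : L | S x}.

(** Data of a (candidate) kappa-frame: order, binary meet, bounds, and a join
    operation on subsets (only required to be the join on small subsets). *)
Record kFrameData := {
  car :> Type;
  le : car -> car -> Prop;
  meet : car -> car -> car;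
  bot : car;
  top : car;
  sup : (car -> Prop) -> car
}.

Arguments le {k} _ _.
Arguments meet {k} _ _.
Arguments bot {k}.
Arguments top {k}.
Arguments sup {k} _.

Definition img {A B : Type} (f : A -> B) (S : A -> Prop) : B -> Prop :=
  fun y => exists x, S x /\ y = f x.

(** [L] is a kappa-frame: a bounded lattice with joins of all subsets of
    cardinality < kappa satisfying the frame distributive law for such joins
    (binary joins are the joins of 2-element subsets, and binary
    distributivity is a special case of the frame law, kappa being infinite). *)
Record is_kFrame (K : Type) (L : kFrameData) : Prop := {
  kf_refl : forall a : L, le a a;
  kf_trans : forall a b c : L, le a b -> le b c -> le a c;
  kf_antisym : forall a b : L, le a b -> le b a -> a = b;
  kf_meet_l : forall a b : L, le (meet a b) a;
  kf_meet_r : forall a b : L, le (meet a b) b;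
  kf_meet_glb : forall a b c : L, le c a -> le c b -> le c (meet a b);
  kf_bot : forall a : L, le bot a;
  kf_top : forall a : L, le a top;
  kf_sup_ub : forall S : L -> Prop, small K S -> forall x, S x -> le x (sup S);
  kf_sup_least : forall (S : L -> Prop) (u : L), small K S ->
      (forall x, S x -> le x u) -> le (sup S) u;
  kf_distr : forall (S : L -> Prop) (a : L), small K S ->
      meet a (sup S) = sup (img (meet a) S)
}.

(** An equivalence relation on [L] which is a sub-kappa-frame of [L x L]
    (joins and meets in [L x L] being computed componentwise). *)
Record congruence (K : Type) (L : kFrameData) (C : L -> L -> Prop) : Prop := {
  cg_refl : forall a, C a a;
  cg_sym : forall a b, C a b -> C b a;
  cg_trans : forall a b c, C a b -> C b c -> C a c;
  cg_bot : C bot bot;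
  cg_top : C top top;
  cg_meet : forall a b c d, C a b -> C c d -> C (meet a c) (meet b d);
  cg_sup : forall S : L * L -> Prop, small K S ->
      (forall p, S p -> C (fst p) (snd p)) ->
      C (sup (img fst S)) (sup (img snd S))
}.

Record kIdeal (K : Type) (L : kFrameData) (I : L -> Prop) : Prop := {
  ki_down : forall a b : L, le a b -> I b -> I a;
  ki_dir : forall S : L -> Prop, small K S -> (forall x, S x -> I x) ->
      exists u, I u /\ forall x, S x -> le x u
}.

Definition partialI {L : kFrameData} (I : L -> Prop) (a b : L) : Prop :=
  forall x : L, I (meet a x) <-> I (meet b x).

Definition clear (K : Type) (L : kFrameData) (C : L -> L -> Prop) : Prop :=
  exists I, kIdeal K L I /\ forall a b, C a b <-> partialI (L:=L) I a b.

Definition DRel {M : kFrameData} (a b : M) : Prop :=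
  forall x : M, meet a x = bot <-> meet b x = bot.

Definition d_reduced (M : kFrameData) : Prop :=
  forall a b : M, DRel a b -> a = b.

Section Quotient.
Variables (L : kFrameData) (C : L -> L -> Prop).

Definition qcar : Type := {P : L -> Prop | exists a, P = C a}.

Definition qcls (a : L) : qcar := exist _ (C a) (ex_intro _ a eq_refl).

Definition qrep (q : qcar) : L := proj1_sig (constructive_indefinite_description _ (proj2_sig q)).

Definition quotient : kFrameData := {|
  car := qcar;
  le := fun q r => C (meet (qrep q) (qrep r)) (qrep q);
  meet := fun q r => qcls (meet (qrep q) (qrep r));
  bot := qcls bot;
  top := qcls top;
  sup := fun S => qcls (sup (img qrep S))
|}.
End Quotient.

From Stdlib Require Import ClassicalEpsilon FunctionalExtensionality PropExtensionality ProofIrrelevance.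

Set Implicit Arguments.

(* The kernel [ker C = {a | C a 0}] of any congruence is a kappa-ideal and
   [C] is contained in [∂_(ker C)].  In [L/C] the classes [[a]] and [[b]] are
   D-related exactly when [a ∧ y ∈ ker C <-> b ∧ y ∈ ker C] for all [y], so
   [L/C] is d-reduced iff [C = ∂_(ker C)].  Conversely, if [C = ∂_I] then
   [C z 0] means [z ∧ x ∈ I] for all [x], i.e. [z ∈ I]; hence [I = ker C]. *)

Lemma proj1_sig_inj (A : Type) (P : A -> Prop) (u v : sig P) :
  proj1_sig u = proj1_sig v -> u = v.
Proof. apply eq_sig_hprop; intros; apply proof_irrelevance. Qed.

Lemma card_le_trans (A B D : Type) : card_le A B -> card_le B D -> card_le A D.
Proof. intros [f hf] [g hg]; exists (fun x => g (f x)); auto. Qed.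

Lemma card_lt_transport (K A B : Type) :
  card_le A B -> card_le B A -> card_lt K A -> card_lt K B.
Proof.
  intros hAB hBA [hAK hKA]; split.
  - exact (card_le_trans hBA hAK).
  - intro hKB; exact (hKA (card_le_trans hKB hBA)).
Qed.

Lemma card_lt_subsingleton (K : Type) (HK : regular_card K) (A : Type) :
  (forall x y : A, x = y) -> card_lt K A.
Proof.
  intro hA; destruct (rc_infinite HK) as [f hf]; split.
  - exists (fun _ => f 0); intros x y _; apply hA.
  - intro hKA; destruct (card_le_trans (rc_infinite HK) hKA) as [g hg].
    discriminate (hg 0 1 (hA _ _)).
Qed.

Lemma small_subsingleton (K : Type) (HK : regular_card K) (L : Type) (S : L -> Prop) :
  (forall x y, S x -> S y -> x = y) -> small K S.
Proof.
  intro hS; apply (card_lt_subsingleton HK).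
  intros [x hx] [y hy]; apply proj1_sig_inj; simpl; auto.
Qed.

Lemma small_img (K A B : Type) (f : A -> B) (S : A -> Prop) :
  (forall x y, f x = f y -> x = y) -> small K S -> small K (img f S).
Proof.
  intro f_inj; apply card_lt_transport.
  - exists (fun x : sig S => exist (img f S) (f (proj1_sig x))
                               (ex_intro _ (proj1_sig x) (conj (proj2_sig x) eq_refl))).
    intros [x hx] [y hy] e; apply proj1_sig_inj; simpl.
    apply f_inj; exact (f_equal (@proj1_sig _ _) e).
  - set (w y := constructive_indefinite_description _ (proj2_sig (P := img f S) y)).
    exists (fun y => exist S (proj1_sig (w y)) (proj1 (proj2_sig (w y)))).
    intros y z e; apply (f_equal (@proj1_sig _ _)) in e; simpl in e.
    apply proj1_sig_inj.
    transitivity (f (proj1_sig (w y))); [exact (proj2 (proj2_sig (w y))) |].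
    rewrite e; symmetry; exact (proj2 (proj2_sig (w z))).
Qed.

Section KFrame.
Variables (K : Type) (HK : regular_card K) (L : kFrameData) (HL : is_kFrame K L).

Lemma meet_l_eq (a b : L) : le a b -> meet a b = a.
Proof.
  intro hab; apply (kf_antisym HL); [apply (kf_meet_l HL) |].
  apply (kf_meet_glb HL); [apply (kf_refl HL) | exact hab].
Qed.

Lemma meet_bot_r (a : L) : meet a bot = bot.
Proof. apply (kf_antisym HL); [apply (kf_meet_r HL) | apply (kf_bot HL)]. Qed.

Lemma meet_bot_l (a : L) : meet bot a = bot.
Proof. apply meet_l_eq, (kf_bot HL). Qed.

Lemma meet_top_r (a : L) : meet a top = a.
Proof. apply meet_l_eq, (kf_top HL). Qed.

Lemma sup_all_bot (S : L -> Prop) : (forall x, S x -> x = bot) -> sup S = bot.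
Proof.
  intro hS.
  assert (small_S : small K S).
  { apply (small_subsingleton HK); intros x y hx hy; rewrite (hS x hx), (hS y hy); reflexivity. }
  apply (kf_antisym HL); [| apply (kf_bot HL)].
  apply (kf_sup_least HL); [exact small_S |].
  intros x hx; rewrite (hS x hx); apply (kf_refl HL).
Qed.

Lemma kIdeal_bot (I : L -> Prop) : kIdeal K L I -> I bot.
Proof.
  intro hI.
  destruct (ki_dir hI (S := fun _ => False)) as [u [hu _]].
  - apply (small_subsingleton HK); tauto.
  - tauto.
  - exact (ki_down hI _ _ (kf_bot HL u) hu).
Qed.

Lemma partialI_bot_r (I : L -> Prop) (z : L) :
  kIdeal K L I -> partialI I z bot <-> I z.
Proof.
  intro hI; unfold partialI; split.
  - intro h; rewrite <- (meet_top_r z); apply h.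
    rewrite meet_bot_l; exact (kIdeal_bot hI).
  - intros hz x; rewrite meet_bot_l; split; intros _.
    + exact (kIdeal_bot hI).
    + exact (ki_down hI _ _ (kf_meet_l HL z x) hz).
Qed.

Section Congruence.
Variables (C : L -> L -> Prop) (HC : congruence K L C).

Definition cg_ker (a : L) : Prop := C a bot.

Lemma cg_meet_l (a b x : L) : C a b -> C (meet a x) (meet b x).
Proof. intro hab; exact (cg_meet HC _ _ _ _ hab (cg_refl HC x)). Qed.

Lemma cg_ker_sup (S : L -> Prop) :
  small K S -> (forall x, S x -> cg_ker x) -> cg_ker (sup S).
Proof.
  intros small_S hS.
  (* Join the pairs [(x, 0)], x in S, in the sub-frame C of L x L. *)
  set (T := img (fun x => (x, @bot L)) S).
  assert (small_T : small K T).
  { apply small_img; [| exact small_S]; intros x y e; injection e; auto. }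
  assert (fst_T : img fst T = S).
  { apply functional_extensionality; intro y; apply propositional_extensionality; split.
    - intros [p [[x [hx ->]] ->]]; exact hx.
    - intro hy; exists (y, bot); split; [exists y; auto | reflexivity]. }
  assert (snd_T : sup (img snd T) = bot).
  { apply sup_all_bot; intros y [p [[x [_ ->]] ->]]; reflexivity. }
  unfold cg_ker; rewrite <- fst_T, <- snd_T.
  apply (cg_sup HC small_T); intros p [x [hx ->]]; exact (hS x hx).
Qed.

Lemma cg_ker_kIdeal : kIdeal K L cg_ker.
Proof.
  split.
  - intros a b hab hb; unfold cg_ker.
    rewrite <- (meet_l_eq a b hab), <- (meet_bot_r a).
    exact (cg_meet HC _ _ _ _ (cg_refl HC a) hb).
  - intros S small_S hS; exists (sup S); split.
    + exact (cg_ker_sup small_S hS).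
    + intros x hx; exact (kf_sup_ub HL small_S x hx).
Qed.

Lemma cg_ker_compat (u v : L) : C u v -> cg_ker u <-> cg_ker v.
Proof.
  intro huv; unfold cg_ker; split; intro h.
  - exact (cg_trans HC _ _ _ (cg_sym HC _ _ huv) h).
  - exact (cg_trans HC _ _ _ huv h).
Qed.

Lemma cg_sub_partial_ker (a b : L) : C a b -> partialI cg_ker a b.
Proof. intros hab x; apply cg_ker_compat, cg_meet_l, hab. Qed.

Lemma clear_ker (I : L -> Prop) :
  kIdeal K L I -> (forall a b, C a b <-> partialI I a b) -> forall a, cg_ker a <-> I a.
Proof. intros hI hCI a; unfold cg_ker; rewrite hCI; exact (partialI_bot_r a hI). Qed.

Lemma qcls_eq (a b : L) : qcls L C a = qcls L C b <-> C a b.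
Proof.
  split; intro e.
  - apply (f_equal (@proj1_sig _ _)) in e; simpl in e.
    rewrite e; apply (cg_refl HC).
  - apply proj1_sig_inj; simpl.
    apply functional_extensionality; intro x; apply propositional_extensionality.
    split; intro h; [exact (cg_trans HC _ _ _ (cg_sym HC _ _ e) h) | exact (cg_trans HC _ _ _ e h)].
Qed.

Lemma qcls_qrep (q : quotient L C) : qcls L C (qrep q) = q.
Proof.
  apply proj1_sig_inj; simpl; unfold qrep.
  destruct (constructive_indefinite_description _ _) as [a ha]; simpl.
  symmetry; exact ha.
Qed.

Lemma qrep_qcls (a : L) : C (qrep (qcls L C a)) a.
Proof. apply qcls_eq; rewrite qcls_qrep; reflexivity. Qed.

Lemma quotient_meet_bot (a : L) (q : quotient L C) :
  meet (k := quotient L C) (qcls L C a) q = bot <-> cg_ker (meet a (qrep q)).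
Proof.
  simpl; rewrite qcls_eq.
  apply cg_ker_compat, cg_meet_l, qrep_qcls.
Qed.

Lemma DRel_quotient (a b : L) :
  DRel (M := quotient L C) (qcls L C a) (qcls L C b) <-> partialI cg_ker a b.
Proof.
  unfold DRel; split.
  - intros h y.
    assert (rep_y : forall c, cg_ker (meet c (qrep (qcls L C y))) <-> cg_ker (meet c y)).
    { intro c; apply cg_ker_compat, (cg_meet HC _ _ _ _ (cg_refl HC c)), qrep_qcls. }
    rewrite <- !rep_y, <- !quotient_meet_bot; apply h.
  - intros h q; rewrite !quotient_meet_bot; apply h.
Qed.

Lemma d_reduced_quotient_iff :
  d_reduced (quotient L C) <-> forall a b, partialI cg_ker a b -> C a b.
Proof.
  split.
  - intros hd a b hab; apply qcls_eq, hd, DRel_quotient, hab.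
  - intros hker q r hqr.
    rewrite <- (qcls_qrep q), <- (qcls_qrep r) in *.
    apply qcls_eq, hker, DRel_quotient, hqr.
Qed.

End Congruence.
End KFrame.

Arguments cg_ker {L} C a.

Theorem mainTheorem11 (K : Type) (HK : regular_card K)
  (L : kFrameData) (HL : is_kFrame K L)
  (C : L -> L -> Prop) (HC : congruence K L C) :
  d_reduced (quotient L C) <-> clear K L C.
Proof.
  rewrite (d_reduced_quotient_iff HC); split.
  - intro hker; exists (cg_ker C); split; [exact (cg_ker_kIdeal HK HL HC) |].
    intros a b; split; [apply (cg_sub_partial_ker HC) | apply hker].
  - intros [I [hI hCI]] a b hab.
    apply hCI; intro x; rewrite <- !(clear_ker HK HL C hI hCI); apply hab.
Qed.
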